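(* For every NBA $\mathcal A$, the relation $P(\subseteq^{\mathrm{bw\text{-}di}},\sqsubset^{\mathrm{di}})$ is good for pruning, i.e. $\mathcal L(\mathrm{Prune}(\mathcal A,P(\subseteq^{\mathrm{bw\text{-}di}},\sqsubset^{\mathrm{di}})))=\mathcal L(\mathcal A)$.
   Context: An NBA is $\mathcal A=(\Sigma,Q,I,F,\delta)$, $\delta\subseteq Q\times\Sigma\times Q$, assumed forward and backward complete; initial traces start in $I$, fair traces are infinite and visit $F$ infinitely often; the language is the set of infinite words with an initial fair trace. Direct simulation $\sqsubseteq^{\mathrm{di}}$: in the game from $(p_0,q_0)$, at round $i$ from $(p_i,q_i)$ Spoiler picks $p_i\xrightarrow{\sigma_i}p_{i+1}$ and Duplicator answers $q_i\xrightarrow{\sigma_i}q_{i+1}$; Duplicator wins the infinite play if $p_i\in F\Rightarrow q_i\in F$ for all $i$; $p\sqsubseteq^{\mathrm{di}}q$ iff Duplicator has a winning strategy from $(p,q)$; $\sqsubset^{\mathrm{di}}$ is its strict part. Backward direct trace inclusion: $p\subseteq^{\mathrm{bw\text{-}di}}q$ iff for every finite word $\sigma_0\cdots\sigma_{m-1}$ and every initial finite trace $p_0\xrightarrow{\sigma_0}\cdots\xrightarrow{\sigma_{m-1}}p_m=p$ there is an initial finite trace $q_0\xrightarrow{\sigma_0}\cdots\xrightarrow{\sigma_{m-1}}q_m=q$ with $p_i\in F\Rightarrow q_i\in F$ for $0\le i\le m$. $\mathrm{Prune}(\mathcal A,P)$ has transition set $\{t\in\delta:\nexists t'\in\delta,(t,t')\in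 P\}$; $P(R_b,R_f)=\{((p,\sigma,r),(p',\sigma,r'))\in\delta\times\delta:p\,R_b\,p',\ r\,R_f\,r'\}$. *)

From mathcomp Require Import all_boot.
Set Implicit Arguments. Unset Strict Implicit. Unset Printing Implicit Defensive.

Record nba (S Q : finType) := NBA {
  init  : Q -> Prop;
  final : Q -> Prop;
  delta : Q -> S -> Q -> Prop }.

Section Defs.
Variables (S Q : finType).
Implicit Types (A : nba S Q).

Definition forward_complete A := forall p a, exists r, delta A p a r.
Definition backward_complete A := forall r a, exists p, delta A p a r.

Definition accepts A (w : nat -> S) : Prop :=
  exists rho : nat -> Q,
    init A (rho 0) /\
    (forall i, delta A (rho i) (w i) (rho i.+1)) /\
    (forall n, exists k, n <= k /\ final A (rho k)).

(* A Duplicator strategy maps the history of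
   Spoiler's moves (sigma_0,p_1) ... (sigma_i,p_{i+1}) to Duplicator's answer
   q_{i+1}.  A Spoiler play is an infinite sequence of moves m i = (sigma_i, p_{i+1}). *)
Definition dup_strategy := seq (S * Q) -> Q.

Definition spoiler_pos (p0 : Q) (m : nat -> S * Q) (i : nat) : Q :=
  if i is j.+1 then (m j).2 else p0.

Definition dup_pos (q0 : Q) (st : dup_strategy) (m : nat -> S * Q) (i : nat) : Q :=
  if i is j.+1 then st (map m (iota 0 j.+1)) else q0.

Definition direct_sim A (p0 q0 : Q) : Prop :=
  exists st : dup_strategy,
    forall m : nat -> S * Q,
      (forall i, delta A (spoiler_pos p0 m i) (m i).1 (spoiler_pos p0 m i.+1)) ->
      (forall i, delta A (dup_pos q0 st m i) (m i).1 (dup_pos q0 st m i.+1)) /\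
      (forall i, final A (spoiler_pos p0 m i) -> final A (dup_pos q0 st m i)).

Definition strict_direct_sim A (p q : Q) : Prop :=
  direct_sim A p q /\ ~ direct_sim A q p.

Definition bw_di_incl A (p q : Q) : Prop :=
  forall (m : nat) (w : nat -> S) (ps : nat -> Q),
    init A (ps 0) ->
    (forall i, i < m -> delta A (ps i) (w i) (ps i.+1)) ->
    ps m = p ->
    exists qs : nat -> Q,
      init A (qs 0) /\
      (forall i, i < m -> delta A (qs i) (w i) (qs i.+1)) /\
      qs m = q /\
      (forall i, i <= m -> final A (ps i) -> final A (qs i)).

Definition trans := (Q * S * Q)%type.

Definition is_trans A (t : trans) : Prop := let: (p, a, r) := t in delta A p a r.

Definition prune A (P : trans -> trans -> Prop) : nba S Q :=
  NBA (init A) (final A)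
    (fun p a r => delta A p a r /\
       ~ (exists t' : trans, is_trans A t' /\ P (p, a, r) t')).

Definition PRel A (Rb Rf : Q -> Q -> Prop) (t t' : trans) : Prop :=
  let: (p, a, r) := t in let: (p', a', r') := t' in
  is_trans A t /\ is_trans A t' /\ a = a' /\ Rb p p' /\ Rf r r'.

End Defs.

From mathcomp Require Import all_boot zify boolp.

Set Implicit Arguments. Unset Strict Implicit. Unset Printing Implicit Defensive.

(* Runs of the pruned automaton are runs of A, so only the converse inclusion
   needs work. Fix an accepting run rho of A and consider the initial runs tau
   on w that are final wherever rho is. If tau takes a pruned transition
   (tau i, w i, tau i.+1), pruned because of (p', w i, r'), then backward
   inclusion provides a new prefix ending in p' that is final wherever tau is,
   and from r', which strictly simulates tau i.+1, the run continues simulating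
   tau. This strictly raises the rank (number of strictly simulated states) at
   position i.+1 and lowers no later rank, so a weight comparing ranks
   lexicographically from the right increases. Hence for every n such a run
   avoids pruned transitions before n, and Koenig's lemma turns these into an
   infinite such run, which is accepting for the pruned automaton. *)

Lemma cid_imply (T : Type) (x : T) (H : Prop) (P : T -> Prop) :
  (H -> exists y, P y) -> {y | H -> P y}.
Proof.
move=> exP; apply: cid; have [/exP [y Py]|nH] := pselect H; first by exists y.
by exists x.
Qed.

Lemma dependent_choice (T : Type) (P : nat -> T -> Prop) (R : nat -> T -> T -> Prop)
    (x0 : T) :
  P 0 x0 -> (forall n x, P n x -> exists y, R n x y /\ P n.+1 y) ->
  exists f : nat -> T, f 0 = x0 /\ forall n, P n (f n) /\ R n (f n) (f n.+1).
Proof.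
move=> P0 step.
have next n x : {y | P n x -> R n x y /\ P n.+1 y} := cid_imply x (step n x).
pose fix f n := if n is m.+1 then sval (next m (f m)) else x0.
have Pf n : P n (f n) by elim: n => //= n IH; exact: (svalP (next n (f n)) IH).2.
by exists f; split=> // n; split=> //; exact: (svalP (next n (f n)) (Pf n)).1.
Qed.

Lemma finite_antitone_witness (Q : finType) (P : nat -> Q -> Prop) :
  (forall n, exists q, P n q) -> (forall n m q, n <= m -> P m q -> P n q) ->
  exists q, forall n, P n q.
Proof.
move=> exP antiP; apply: contrapT => noq.
have /choice [N HN] : forall q, exists n, ~ P n q.
  by move=> q; apply/existsNP => Pq; apply: noq; exists q.
have [q Pq] := exP (\max_(q : Q) N q).
exact: HN q (antiP (N q) _ q (leq_bigmax q) Pq).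
Qed.

Lemma konig (Q : finType) (G : nat -> (nat -> Q) -> Prop) :
  (forall n, exists tau, G n tau) -> (forall n m tau, n <= m -> G m tau -> G n tau) ->
  exists sg : nat -> Q,
    forall k n, exists tau, G n tau /\ forall j, j < k -> tau j = sg j.
Proof.
move=> exG antiG.
pose extends k (sg : nat -> Q) :=
  forall n, exists tau, G n tau /\ forall j, j < k -> tau j = sg j.
have extend k sg : extends k sg ->
    exists sg', (forall j, j < k -> sg' j = sg j) /\ extends k.+1 sg'.
  move=> ext.
  pose P n q := exists tau, G n tau /\ (forall j, j < k -> tau j = sg j) /\ tau k = q.
  have [q Pq] : exists q, forall n, P n q.
    apply: finite_antitone_witness => [n|n m q le_nm [tau [Gtau agree]]].
      by have [tau [Gtau agree]] := ext n; exists (tau k), tau.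
    by exists tau; split=> //; exact: antiG le_nm Gtau.
  exists (fun j => if j < k then sg j else q); split=> [j ->//|n].
  have [tau [Gtau [agree tau_k]]] := Pq n; exists tau; split=> // j.
  rewrite ltnS leq_eqVlt => /orP[/eqP->|lt_jk]; first by rewrite ltnn.
  by rewrite lt_jk agree.
have [sg0 _] := exG 0.
have ext0 : extends 0 sg0 by move=> n; have [tau Gtau] := exG n; exists tau.
have [f [_ fP]] := dependent_choice ext0 extend.
have f_stable k j : j < k -> f k j = f j.+1 j.
  elim: k => // k IH; rewrite ltnS leq_eqVlt => /orP[/eqP->//|lt_jk].
  by rewrite (proj2 (fP k)) ?IH.
exists (fun j => f j.+1 j) => k n.
have [tau [Gtau agree]] := proj1 (fP k) n.
by exists tau; split=> // j lt_jk; rewrite agree ?f_stable.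
Qed.

Fixpoint numeral (B : nat) (d : nat -> nat) (n : nat) : nat :=
  if n is n.+1 then numeral B d n + d n * B ^ n else 0.

Lemma numeral_lt_exp B d n : (forall j, d j < B) -> numeral B d n < B ^ n.
Proof.
move=> d_lt; elim: n => [|n IH] //=; rewrite expnS.
by have := d_lt n; move: (B ^ n) IH => X; nia.
Qed.

Lemma numeral_lt_lex B a b k n :
  (forall j, a j < B) -> k < n -> a k < b k ->
  (forall j, k < j < n -> a j <= b j) -> numeral B a n < numeral B b n.
Proof.
move=> a_lt; elim: n => // n IH lt_kn lt_ab le_ab /=.
have [eq_kn|ne_kn] := eqVneq k n.
  subst k; have := numeral_lt_exp n a_lt.
  have : (a n).+1 * B ^ n <= b n * B ^ n by rewrite leq_mul2r lt_ab orbT.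
  lia.
have : a n * B ^ n <= b n * B ^ n by rewrite leq_mul2r le_ab ?orbT //; lia.
have := IH ltac:(lia) lt_ab (fun j lt_j => le_ab j ltac:(lia)); lia.
Qed.

Definition is_run (S Q : finType) (A : nba S Q) (w : nat -> S) (rho : nat -> Q) :=
  forall i, delta A (rho i) (w i) (rho i.+1).

Section DirectSimulation.
Variables (S Q : finType) (A : nba S Q).
Hypothesis fc : forward_complete A.

Lemma ex_run (w : nat -> S) p : exists rho, rho 0 = p /\ is_run A w rho.
Proof.
have [i q _|rho [rho0 run]] :=
  @dependent_choice _ (fun _ _ => True) (fun i q q' => delta A q (w i) q') p I.
  by have [q' qq'] := fc q (w i); exists q'.
by exists rho; split=> // i; case: (run i).
Qed.

(* The letter [a] only makes Spoiler's moves possible: with an empty alphabet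
   every pair of states would be in direct simulation. *)
Lemma sim_final (a : S) p q : direct_sim A p q -> final A p -> final A q.
Proof.
case=> st win Fp; have [rho [rho0 run]] := ex_run (fun _ => a) p.
pose m i := (a, rho i.+1).
have spoiler_rho i : spoiler_pos p m i = rho i by case: i.
have [|_ /(_ 0 Fp)//] := win m.
by move=> i; rewrite !spoiler_rho; exact: run.
Qed.

Lemma sim_step p q a p' : direct_sim A p q -> delta A p a p' ->
  exists q', delta A q a q' /\ direct_sim A p' q'.
Proof.
case=> st win pp'; have [rho [rho0 run]] := ex_run (fun _ => a) p'.
have [|qq' _] := win (fun i => (a, rho i)).
  by case=> [|i] /=; rewrite ?rho0 //; exact: run.
exists (st [:: (a, p')]); split; first by move: (qq' 0) => /=; rewrite rho0.
exists (fun h => st ((a, p') :: h)) => m play.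
pose m' i := if i is j.+1 then m j else (a, p').
have spoiler_shift i : spoiler_pos p m' i.+1 = spoiler_pos p' m i by case: i.
have dup_shift i : dup_pos q st m' i.+1 =
    dup_pos (st [:: (a, p')]) (fun h => st ((a, p') :: h)) m i.
  by case: i => [|i] //=; rewrite -[2]/(1 + 1) iotaDl -map_comp.
have [|dup_run dup_final] := win m'.
  by case=> [|i] //; rewrite !spoiler_shift; exact: play.
split=> i; first by have := dup_run i.+1; rewrite !dup_shift.
by rewrite -dup_shift -spoiler_shift; exact: dup_final.
Qed.

Lemma sim_run (w : nat -> S) tau r : is_run A w tau -> direct_sim A (tau 0) r ->
  exists sg, [/\ sg 0 = r, is_run A w sg & forall j, direct_sim A (tau j) (sg j)].
Proof.
move=> run sim0.
have [j q /sim_step/(_ (run j)) [q' [qq' sim']]|sg [sg0 sg_run]] :=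
  @dependent_choice _ (fun j q => direct_sim A (tau j) q)
    (fun j q q' => delta A q (w j) q') r sim0.
  by exists q'.
by exists sg; split=> // j; case: (sg_run j).
Qed.

Definition direct_sim_rel (R : Q -> Q -> Prop) :=
  (forall p q, R p q -> final A p -> final A q) /\
  (forall p q a p', R p q -> delta A p a p' -> exists q', delta A q a q' /\ R p' q').

Lemma direct_sim_of_rel R : direct_sim_rel R -> forall p q, R p q -> direct_sim A p q.
Proof.
move=> [R_final R_step] p0 q0 R0.
have answer p q a p' : {q' | R p q /\ delta A p a p' -> delta A q a q' /\ R p' q'}.
  by apply: (cid_imply q) => -[/R_step]; apply.
(* Duplicator replays the history, keeping the current pair of states in R. *)
pose step (pq : Q * Q) (ap' : S * Q) := (ap'.2, sval (answer pq.1 pq.2 ap'.1 ap'.2)).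
pose st h := (foldl step (p0, q0) h).2.
exists st => m play.
have iota_rcons k : iota 0 k.+1 = rcons (iota 0 k) k by rewrite -cats1 -addn1 iotaD.
have fold_pos k : foldl step (p0, q0) (map m (iota 0 k)) =
    (spoiler_pos p0 m k, dup_pos q0 st m k).
  case: k => [|k] //; rewrite [LHS]surjective_pairing; congr pair.
  by rewrite iota_rcons map_rcons foldl_rcons.
have dup_next k : dup_pos q0 st m k.+1 =
    sval (answer (spoiler_pos p0 m k) (dup_pos q0 st m k) (m k).1 (spoiler_pos p0 m k.+1)).
  by rewrite {1}/dup_pos {1}/st iota_rcons map_rcons foldl_rcons fold_pos.
have inv k : R (spoiler_pos p0 m k) (dup_pos q0 st m k) /\
    delta A (dup_pos q0 st m k) (m k).1 (dup_pos q0 st m k.+1).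
  elim: k => [|k [IH _]].
    by split=> //; rewrite dup_next; exact: (svalP (answer _ _ _ _) (conj R0 (play 0))).1.
  have R_next : R (spoiler_pos p0 m k.+1) (dup_pos q0 st m k.+1).
    by rewrite dup_next; exact: (svalP (answer _ _ _ _) (conj IH (play k))).2.
  split=> //; rewrite [dup_pos _ _ _ k.+2]dup_next.
  exact: (svalP (answer _ _ _ _) (conj R_next (play k.+1))).1.
by split=> i; [case: (inv i) | apply: R_final; case: (inv i)].
Qed.

Lemma sim_refl p : direct_sim A p p.
Proof.
apply: (@direct_sim_of_rel eq) => //; split=> [p0 q0 -> //|p0 q0 a p' -> pp'].
by exists p'.
Qed.

Lemma sim_trans (a : S) p q r :
  direct_sim A p q -> direct_sim A q r -> direct_sim A p r.
Proof.
move=> pq qr; apply: (@direct_sim_of_rel (fun p r => exists2 q,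
  direct_sim A p q & direct_sim A q r)); last by exists q.
split=> [p0 r0 [q0 pq0 qr0] /(sim_final a pq0) /(sim_final a qr0)//|].
move=> p0 r0 b p' [q0 pq0 qr0] /(sim_step pq0) [q' [qq' pq']].
by have [r' [rr' qr']] := sim_step qr0 qq'; exists r'; split=> //; exists q'.
Qed.

End DirectSimulation.

Section Pruning.
Variables (S Q : finType) (A : nba S Q) (w : nat -> S).
Hypothesis fc : forward_complete A.

Local Notation pruned := (prune A (PRel A (bw_di_incl A) (strict_direct_sim A))).

Definition strictly_simulated (q : Q) : {set Q} :=
  [set s | `[< strict_direct_sim A s q >]].

Definition sim_rank (q : Q) := #|strictly_simulated q|.

Lemma sim_rank_lt q : sim_rank q < #|Q|.+1.
Proof. by rewrite ltnS max_card. Qed.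

Lemma strictly_simulated_sub p q :
  direct_sim A p q -> strictly_simulated p \subset strictly_simulated q.
Proof.
move=> pq; apply/subsetP => s; rewrite !inE => /asboolP[sp Nps]; apply/asboolP.
split=> [|qs]; first exact: (sim_trans fc (w 0) sp pq).
by apply: Nps; exact: (sim_trans fc (w 0) pq qs).
Qed.

Lemma sim_rank_le p q : direct_sim A p q -> sim_rank p <= sim_rank q.
Proof. by move/strictly_simulated_sub/subset_leq_card. Qed.

Lemma sim_rank_lt_strict p q : strict_direct_sim A p q -> sim_rank p < sim_rank q.
Proof.
move=> [pq Nqp]; apply/proper_card/properP; split; first exact: strictly_simulated_sub.
exists p; rewrite !inE; first exact/asboolP.
by apply/asboolP => -[_]; apply; exact: sim_refl.
Qed.


Definition dominates (rho tau : nat -> Q) :=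
  [/\ init A (tau 0), is_run A w tau & forall k, final A (rho k) -> final A (tau k)].

Definition pruned_upto n (tau : nat -> Q) :=
  forall i, i < n -> delta pruned (tau i) (w i) (tau i.+1).

(* Position n is the most significant digit: redirecting a run at position i
   changes the prefix up to i arbitrarily but raises the rank at i.+1. *)
Definition rank_weight n (tau : nat -> Q) :=
  numeral #|Q|.+1 (fun j => sim_rank (tau j)) n.+1.

Lemma pruned_witness p a r : delta A p a r -> ~ delta pruned p a r ->
  exists p' r', [/\ delta A p' a r', bw_di_incl A p p' & strict_direct_sim A r r'].
Proof.
move=> pr Npr; apply: contrapT => none; apply: Npr; split=> //.
move=> [[[p' a'] r'] [pr' [_ [_ [eq_a [bw st]]]]]]; subst a'.
by apply: none; exists p', r'.
Qed.

Lemma dominates_redirect rho tau i p' r' :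
  dominates rho tau -> bw_di_incl A (tau i) p' -> delta A p' (w i) r' ->
  direct_sim A (tau i.+1) r' ->
  exists tau', [/\ dominates rho tau', tau' i.+1 = r' &
                   forall j, i < j -> direct_sim A (tau j) (tau' j)].
Proof.
move=> [tau0 run fin] bw pr' sim.
have [qs [qs0 [qs_run [qs_i qs_fin]]]] := bw i w tau tau0 (fun j _ => run j) erefl.
have [sg [sg0 sg_run sg_sim]] :=
  @sim_run _ _ _ fc (fun j => w (j + i.+1)) (fun j => tau (j + i.+1)) r' (fun j => run _) sim.
pose tau' j := if j <= i then qs j else sg (j - i.+1).
have tau'_sg j : i < j -> tau' j = sg (j - i.+1).
  by move=> lt_ij; rewrite /tau' leqNgt lt_ij.
have sim' j : i < j -> direct_sim A (tau j) (tau' j).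
  by move=> lt_ij; rewrite tau'_sg // -{1}(subnK lt_ij); exact: sg_sim.
exists tau'; split=> //; last by rewrite tau'_sg ?subnn.
split=> [|j|k]; first by rewrite /tau'.
  case: (ltngtP j i) => [lt_ji|lt_ij|->].
  - by rewrite /tau' (ltnW lt_ji) lt_ji; exact: qs_run.
  - rewrite (tau'_sg _ lt_ij) (tau'_sg _ (leqW lt_ij)) subSS -[j - i](subnSK lt_ij).
    by have := sg_run (j - i.+1); rewrite /= (subnK lt_ij).
  - by rewrite /tau' leqnn ltnn subnn sg0 qs_i.
have [le_ki|lt_ik] := leqP k i; first by rewrite /tau' le_ki => /fin; exact: qs_fin.
by move=> /fin; exact: (sim_final fc (w 0) (sim' k lt_ik)).
Qed.

Lemma rank_weight_improve rho tau i n :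
  dominates rho tau -> i < n -> ~ delta pruned (tau i) (w i) (tau i.+1) ->
  exists tau', dominates rho tau' /\ rank_weight n tau < rank_weight n tau'.
Proof.
move=> dom lt_in Npr; have [_ run _] := dom.
have [p' [r' [pr' bw st]]] := pruned_witness (run i) Npr.
have [tau' [dom' tau'_i sim']] := dominates_redirect dom bw pr' st.1.
exists tau'; split=> //; apply: (@numeral_lt_lex _ _ _ i.+1) => [j||| j /andP[lt_ij _]].
- exact: sim_rank_lt.
- exact: lt_in.
- by rewrite tau'_i; exact: sim_rank_lt_strict.
- by apply: sim_rank_le; apply: sim' (ltnW lt_ij).
Qed.

Lemma ex_pruned_upto rho tau n :
  dominates rho tau -> exists tau', dominates rho tau' /\ pruned_upto n tau'.
Proof.
have [d] := ubnP (#|Q|.+1 ^ n.+1 - rank_weight n tau).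
elim: d tau => // d IH tau lt_d dom.
have [pr|/existsNP[i /not_implyP[lt_in Npr]]] := pselect (pruned_upto n tau).
  by exists tau.
have [tau' [dom' lt_w]] := rank_weight_improve dom lt_in Npr.
apply: IH dom'; have := numeral_lt_exp n.+1 (fun j => sim_rank_lt (tau' j)).
rewrite -/(rank_weight n tau'); lia.
Qed.

Lemma pruned_accepts : accepts A w -> accepts pruned w.
Proof.
move=> [rho [rho0 [run fair]]].
have [n|n m tau le_nm [dom pr]|sg sgP] :=
  @konig Q (fun n tau => dominates rho tau /\ pruned_upto n tau).
- by apply: (ex_pruned_upto (tau := rho)).
- by split=> // i lt_in; apply: pr; exact: leq_trans le_nm.
exists sg; split; [|split].
- by have [tau [[[tau0 _ _] _] agree]] := sgP 1 0; rewrite -agree.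
- move=> i; have [tau [[_ pr] agree]] := sgP i.+2 i.+1.
  by have := pr i (ltnSn i); rewrite !agree.
- move=> n; have [k [le_nk Fk]] := fair n; exists k; split=> //.
  by have [tau [[[_ _ fin] _] agree]] := sgP k.+1 0; rewrite -agree //; exact: fin.
Qed.
End Pruning.

Theorem theorem5p4 (S Q : finType) (A : nba S Q) :
  forward_complete A -> backward_complete A ->
  forall w : nat -> S,
    accepts (prune A (PRel A (bw_di_incl A) (strict_direct_sim A))) w <->
    accepts A w.
Proof.
move=> fc _ w; split; last exact: pruned_accepts.
by move=> [rho [rho0 [run fair]]]; exists rho; split=> //; split=> // i; case: (run i).
Qed.
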